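(* There exist instances of the two-valued atomic model and a $(k,l)$-partition that is a Nash equilibrium under the proportional-to-square-roots scheme, such that the proportional-to-square-roots scheme is not Sybil-proof with respect to this partition.
   Context: Atomic model with threshold $h$: every player has stake $1$ (small) or $a$ (large), with $h,a$ integers, $2\le a\le h-1$. Pools partition the players; a pool $C$ has reward $\rho(C)=1$ if its total stake is at least $h$, else $0$. Proportional-to-square-roots scheme: player $i$ with stake $a_i$ in pool $C$ receives $\frac{\sqrt{a_i}}{\sum_{j\in C}\sqrt{a_j}}\rho(C)$. A partition into winning pools is a Nash equilibrium if no player can strictly increase her payment by moving to another pool or opening a new pool alone. For integers $k,l$ with $k+a\ge h$ and $l\ge h+1$, a $(k,l)$-partition consists only of pools of the types: Type A: exactly one large player and $k$ small players; Type B: $l$ small players; Type C: $l-1$ small players. Sybil strategy: given a partition $\Pi$, a player of stake $a_i$ splits her stake into nonnegative amounts $s_1,\dots,s_t$ summing to $a_i$ and joins $t$ distinct pools of $\Pi$ (her original pool taken without her), contributing $s_j$ to the $j$-th as a separate identity of stake $s_j$; others stay put; her payoff is the sum of the payments to her identities. The scheme is Sybil-proof with respect to $\Pi$ if no player becomes strictly better off by a Sybil strategy. *)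

From Stdlib Require Import Reals Lra Lia List Arith.
Import ListNotations.
Open Scope R_scope.

(* An instance of the atomic model: players are 0, ..., n-1;
   [stake i] is the (natural-number) stake of player i;
   a partition is given by a labelling [pool : nat -> nat] (player i is in
   the pool labelled [pool i]); the pools of the partition are the nonempty
   label classes. *)

Definition Rsum (l : list R) : R := fold_right Rplus 0 l.

Definition rho (h : nat) (s : R) : R := if Rle_lt_dec (INR h) s then 1 else 0.

Definition players (n : nat) : list nat := seq 0 n.

Definition members (n : nat) (pool : nat -> nat) (c : nat) : list nat :=
  filter (fun j => Nat.eqb (pool j) c) (players n).

Definition others (n : nat) (pool : nat -> nat) (c i : nat) : list nat :=
  filter (fun j => negb (Nat.eqb j i)) (members n pool c).

Definition is_pool (n : nat) (pool : nat -> nat) (c : nat) : Prop :=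
  exists j, (j < n)%nat /\ pool j = c.

Definition tot_stake (stake : nat -> nat) (l : list nat) : R :=
  Rsum (map (fun j => INR (stake j)) l).

Definition sqrt_sum (stake : nat -> nat) (l : list nat) : R :=
  Rsum (map (fun j => sqrt (INR (stake j))) l).

(* payment (proportional-to-square-roots) to an identity of stake s
   in a pool consisting of the players in l together with this identity *)
Definition pay_join (h : nat) (stake : nat -> nat) (l : list nat) (s : R) : R :=
  sqrt s / (sqrt_sum stake l + sqrt s) * rho h (tot_stake stake l + s).

Definition payment (h n : nat) (stake : nat -> nat) (pool : nat -> nat) (i : nat) : R :=
  let C := members n pool (pool i) in
  sqrt (INR (stake i)) / sqrt_sum stake C * rho h (tot_stake stake C).

Definition valid_instance (h a n : nat) (stake : nat -> nat) : Prop :=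
  (2 <= a)%nat /\ (a <= h - 1)%nat /\
  forall i, (i < n)%nat -> stake i = 1%nat \/ stake i = a.

Definition n_small (n : nat) (stake pool : nat -> nat) (c : nat) : nat :=
  length (filter (fun j => Nat.eqb (stake j) 1) (members n pool c)).
Definition n_large (a n : nat) (stake pool : nat -> nat) (c : nat) : nat :=
  length (filter (fun j => Nat.eqb (stake j) a) (members n pool c)).

Definition kl_partition (h a n : nat) (stake pool : nat -> nat) (k l : nat) : Prop :=
  (h <= k + a)%nat /\ (h + 1 <= l)%nat /\
  forall c, is_pool n pool c ->
    (n_large a n stake pool c = 1%nat /\ n_small n stake pool c = k)
    \/ (n_large a n stake pool c = 0%nat /\ n_small n stake pool c = l)
    \/ (n_large a n stake pool c = 0%nat /\ n_small n stake pool c = (l - 1)%nat).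

(* Nash equilibrium: all pools winning, and no player strictly gains by
   moving to another pool or by opening a new pool alone. *)
Definition nash_eq (h n : nat) (stake pool : nat -> nat) : Prop :=
  (forall c, is_pool n pool c -> INR h <= tot_stake stake (members n pool c)) /\
  (forall i, (i < n)%nat ->
     (forall c, is_pool n pool c -> c <> pool i ->
        pay_join h stake (members n pool c) (INR (stake i)) <= payment h n stake pool i) /\
     pay_join h stake [] (INR (stake i)) <= payment h n stake pool i).

(* Its payoff: each identity joins the corresponding pool
   (taken without i). *)
Definition sybil_strategy (n : nat) (stake pool : nat -> nat) (i : nat)
    (st : list (nat * R)) : Prop :=
  NoDup (map fst st) /\
  (forall p, In p st -> is_pool n pool (fst p) /\ 0 <= snd p) /\
  Rsum (map snd st) = INR (stake i).

Definition sybil_payoff (h n : nat) (stake pool : nat -> nat) (i : nat)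
    (st : list (nat * R)) : R :=
  Rsum (map (fun p => pay_join h stake (others n pool (fst p) i) (snd p)) st).

Definition sybil_proof (h n : nat) (stake pool : nat -> nat) : Prop :=
  forall i st, (i < n)%nat -> sybil_strategy n stake pool i st ->
    sybil_payoff h n stake pool i st <= payment h n stake pool i.

From Stdlib Require Import Reals List Lra Lia.
Import ListNotations.
Open Scope R_scope.

(* Take threshold 3 and eight small players in two pools of four: every pool
   wins, joining the other pool would dilute a player's share from 1/4 to 1/5,
   and a player alone loses.  But square roots reward splitting: a player who
   puts stake 1/2 into her own pool (now 3 + 1/2 >= 3, still winning) and 1/2
   into the other pool gets weight sqrt(1/2) in each, and
   sqrt(1/2)/(3 + sqrt(1/2)) + sqrt(1/2)/(4 + sqrt(1/2)) > 1/4. *)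

Lemma rho_win h s : INR h <= s -> rho h s = 1.
Proof. intro Hs; unfold rho; destruct (Rle_lt_dec (INR h) s); lra. Qed.

Lemma rho_lose h s : s < INR h -> rho h s = 0.
Proof. intro Hs; unfold rho; destruct (Rle_lt_dec (INR h) s); lra. Qed.

Definition unit_stake (_ : nat) : nat := 1.

Lemma tot_stake_unit l : tot_stake unit_stake l = INR (length l).
Proof.
  induction l as [|j l IH]; [reflexivity|].
  unfold tot_stake, Rsum in *; cbn [map fold_right length].
  rewrite IH, S_INR; simpl; lra.
Qed.

Lemma sqrt_sum_unit l : sqrt_sum unit_stake l = INR (length l).
Proof.
  induction l as [|j l IH]; [reflexivity|].
  unfold sqrt_sum, Rsum in *; cbn [map fold_right length].
  rewrite IH, S_INR; simpl; rewrite sqrt_1; lra.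
Qed.

Lemma pay_join_unit h l s :
  INR h <= INR (length l) + s ->
  pay_join h unit_stake l s = sqrt s / (INR (length l) + sqrt s).
Proof.
  intro Hwin; unfold pay_join.
  rewrite sqrt_sum_unit, tot_stake_unit, rho_win by exact Hwin; lra.
Qed.

Lemma payment_unit h n pool i :
  INR h <= INR (length (members n pool (pool i))) ->
  payment h n unit_stake pool i = 1 / INR (length (members n pool (pool i))).
Proof.
  intro Hwin; unfold payment.
  rewrite sqrt_sum_unit, tot_stake_unit, rho_win by exact Hwin.
  unfold unit_stake; simpl INR; rewrite sqrt_1; lra.
Qed.

Lemma valid_instance_unit h a n :
  (2 <= a <= h - 1)%nat -> valid_instance h a n unit_stake.
Proof. intros Ha; repeat split; try lia; now left. Qed.

Lemma kl_partition_unit h a n pool k l :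
  (2 <= a)%nat -> (h <= k + a)%nat -> (h + 1 <= l)%nat ->
  (forall c, is_pool n pool c -> length (members n pool c) = l) ->
  kl_partition h a n unit_stake pool k l.
Proof.
  intros Ha Hk Hl Hsize; repeat split; try lia.
  intros c Hc; right; left.
  unfold n_large, n_small, unit_stake.
  rewrite (proj2 (Nat.eqb_neq 1 a)) by lia.
  rewrite filter_false, filter_true; auto.
Qed.

Lemma nash_eq_unit h n pool m :
  (2 <= h <= m)%nat ->
  (forall c, is_pool n pool c -> length (members n pool c) = m) ->
  nash_eq h n unit_stake pool.
Proof.
  intros Hhm Hsize.
  assert (Hh : 2 <= INR h <= INR m) by (split; [apply (le_INR 2)|apply le_INR]; lia).
  split.
  - intros c Hc; rewrite tot_stake_unit, Hsize by exact Hc; lra.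
  - intros i Hi.
    assert (Hown : is_pool n pool (pool i)) by (exists i; auto).
    rewrite payment_unit, (Hsize _ Hown) by (rewrite (Hsize _ Hown); lra).
    unfold unit_stake; simpl INR; split.
    + intros c Hc _.
      rewrite pay_join_unit, (Hsize _ Hc), sqrt_1 by (rewrite (Hsize _ Hc); lra).
      apply Rmult_le_compat_l, Rinv_le_contravar; lra.
    + unfold pay_join; rewrite rho_lose by (simpl; unfold tot_stake; simpl; lra).
      assert (0 < 1 / INR m) by (apply Rdiv_lt_0_compat; lra).
      lra.
Qed.

Lemma half_lt_sqrt_half : 1 / 2 < sqrt (/ 2).
Proof.
  assert (Hsq : sqrt (/ 2) * sqrt (/ 2) = / 2) by (apply sqrt_sqrt; lra).
  pose proof (sqrt_pos (/ 2)); nra.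
Qed.

Lemma split_unit_gain x :
  1 / 2 < x -> 1 / 4 < x / (3 + x) + x / (4 + x).
Proof.
  intro Hx.
  assert (Hdiff : x / (3 + x) + x / (4 + x) - 1 / 4
                  = (7 * x * x + 21 * x - 12) / (4 * (3 + x) * (4 + x)))
    by (field; lra).
  assert (0 < (7 * x * x + 21 * x - 12) / (4 * (3 + x) * (4 + x)))
    by (apply Rdiv_lt_0_compat; nra).
  lra.
Qed.

Definition halves (j : nat) : nat := if Nat.ltb j 4 then 0 else 1.

Lemma halves_pool_size c : is_pool 8 halves c -> length (members 8 halves c) = 4%nat.
Proof. intros [j [_ <-]]; unfold halves; now destruct (Nat.ltb j 4). Qed.

Lemma halves_not_sybil_proof : ~ sybil_proof 3 8 unit_stake halves.
Proof.
  set (st := [(0%nat, / 2); (1%nat, / 2)]).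
  assert (Hst : sybil_strategy 8 unit_stake halves 0 st).
  { split; [|split].
    - repeat constructor; simpl; intuition discriminate.
    - intros p [<-|[<-|[]]]; split; simpl; try lra.
      + exists 0%nat; split; [lia | reflexivity].
      + exists 4%nat; split; [lia | reflexivity].
    - simpl; lra. }
  assert (Hpayoff : sybil_payoff 3 8 unit_stake halves 0 st
                    = sqrt (/ 2) / (3 + sqrt (/ 2)) + sqrt (/ 2) / (4 + sqrt (/ 2))).
  { unfold sybil_payoff, Rsum, st; cbn [map fold_right fst snd].
    rewrite !pay_join_unit by (simpl; lra).
    simpl; rewrite Rplus_0_r.
    replace (1 + 1 + 1 + 1) with 4 by lra; replace (1 + 1 + 1) with 3 by lra.
    reflexivity. }
  assert (Hpay : payment 3 8 unit_stake halves 0 = 1 / 4).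
  { rewrite payment_unit by (simpl; lra). simpl; lra. }
  intro Hsp; specialize (Hsp 0%nat st ltac:(lia) Hst).
  rewrite Hpayoff, Hpay in Hsp.
  pose proof (split_unit_gain _ half_lt_sqrt_half); lra.
Qed.

Theorem theorem6p3 :
  exists (h a n : nat) (stake pool : nat -> nat) (k l : nat),
    valid_instance h a n stake /\
    kl_partition h a n stake pool k l /\
    nash_eq h n stake pool /\
    ~ sybil_proof h n stake pool.
Proof.
  exists 3%nat, 2%nat, 8%nat, unit_stake, halves, 1%nat, 4%nat.
  split; [|split; [|split]].
  - apply valid_instance_unit; lia.
  - apply kl_partition_unit; [lia | lia | lia | exact halves_pool_size].
  - apply (nash_eq_unit _ _ _ 4); [lia | exact halves_pool_size].
  - exact halves_not_sybil_proof.
Qed.
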